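(* Let $k\ge3$ and let $\mathcal S=\sum_{\alpha\ge k}\Psi^{(\alpha)}\,\partial/\partial\psi^{(\alpha)}$ be a symmetry of $\mathcal E_*$ (an invisible symmetry of depth $k$), i.e. $[\mathcal S,D^{( * )}_x]=[\mathcal S,D^{( * )}_y]=0$, with $\Psi^{(\alpha)}$ smooth functions on $\mathcal E_*$. Then $\Psi^{(k)}$ and $\Psi^{(k+1)}$ are constants. In particular, if $\Psi^{(k)}\neq0$, then after multiplication by a nonzero constant $$\mathcal S=\frac{\partial}{\partial\psi^{(k)}}+\gamma\frac{\partial}{\partial\psi^{(k+1)}}+\sum_{\alpha\ge k+2}\Psi^{(\alpha)}\frac{\partial}{\partial\psi^{(\alpha)}},\qquad\gamma\in\mathbb R.$$
   Context: Let $\mathcal E_1$ be the system $u_y+vu_x=\frac1{v-u}$, $v_y+uv_x=\frac1{u-v}$ with internal coordinates $x,y,u_i=\partial^iu/\partial x^i$, $v_i=\partial^iv/\partial x^i$ ($i\ge0$) and total derivatives $D_x=\partial_x+\sum_i(u_{i+1}\partial_{u_i}+v_{i+1}\partial_{v_i})$, $D_y=\partial_y+\sum_i\big(D_x^i(\tfrac1{v-u}-vu_1)\partial_{u_i}+D_x^i(\tfrac1{u-v}-uv_1)\partial_{v_i}\big)$. Let $\sigma_m=\sum_{i+j=m}u^iv^j$, $\psi^{(1)}=y$, $\psi^{(2)}=x$, and for $k\ge2$ put $X^{(k)}=\sigma_{k-2}-\sum_{i=1}^{k-3}i\,\sigma_{k-i-3}\psi^{(i)}$, for $k\ge3$ put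 $Y^{(k)}=-uv\,X^{(k-1)}-(k-2)\psi^{(k-2)}$. The space $\mathcal E_*$ has coordinates $x,y,u_i,v_i$ and $\psi^{(k)}$, $k\ge3$, with commuting total derivatives $D^{( * )}_x=D_x+\sum_{k\ge3}X^{(k)}\partial/\partial\psi^{(k)}$, $D^{( * )}_y=D_y+\sum_{k\ge3}Y^{(k)}\partial/\partial\psi^{(k)}$. Functions on $\mathcal E_*$ depend on finitely many coordinates. *)

From Stdlib Require List.
From HB Require Import structures.
From mathcomp Require Import all_boot all_order all_algebra.
From mathcomp Require Import all_classical all_reals all_analysis.
Set Implicit Arguments. Unset Strict Implicit. Unset Printing Implicit Defensive.
Import Order.TTheory GRing.Theory Num.Theory.
Import numFieldNormedType.Exports.
Local Open Scope classical_set_scope.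
Local Open Scope ring_scope.

(* Coordinates of E_* : x, y, u_i, v_i (i >= 0), and psi^(a+3) encoded as Psic a. *)
Inductive Coord : Type :=
| Cx : Coord | Cy : Coord | Cu : nat -> Coord | Cv : nat -> Coord | Cpsi : nat -> Coord.

Scheme Equality for Coord.

Section Defs.
Variable R : realType.

Definition Pt := Coord -> R.

(* domain of E_*: u <> v (the system involves 1/(v-u)) *)
Definition Dom (p : Pt) : Prop := p (Cu 0) <> p (Cv 0).

Definition shift (p : Pt) (c : Coord) (t : R) : Pt :=
  fun c' => if Coord_eq_dec c' c then p c' + t else p c'.

Definition pd (c : Coord) (F : Pt -> R) : Pt -> R :=
  fun p => derive1 (fun t => F (shift p c t)) 0.

Definition iterD n (vs : seq 'rV[R]_n) (g : 'rV[R]_n -> R) : 'rV[R]_n -> R :=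
  foldr (fun v h => fun x => 'D_v h x) g vs.

Definition smooth_on n (U : set 'rV[R]_n) (g : 'rV[R]_n -> R) : Prop :=
  forall (vs : seq 'rV[R]_n) (x : 'rV[R]_n), U x ->
    {for x, continuous (iterD vs g)} /\ (forall v, derivable (iterD vs g) x v).

Definition restr (cs : seq Coord) (p : Pt) : 'rV[R]_(size cs) :=
  \row_(i < size cs) p (nth Cx cs i).

Definition smoothfun (F : Pt -> R) : Prop :=
  exists cs : seq Coord, List.NoDup cs /\
  exists g : 'rV[R]_(size cs) -> R,
    (forall p, Dom p -> F p = g (restr cs p)) /\
    smooth_on [set w | exists2 p, Dom p & w = restr cs p] g.

Definition sigma (m : nat) (p : Pt) : R :=
  \sum_(i < m.+1) p (Cu 0) ^+ i * p (Cv 0) ^+ (m - i).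

Definition psi (k : nat) (p : Pt) : R :=
  match k with 1 => p Cy | 2 => p Cx | _ => p (Cpsi (k - 3)) end.

Definition Xc (k : nat) (p : Pt) : R :=
  sigma (k - 2) p - \sum_(1 <= i < k - 2) i%:R * sigma (k - i - 3) p * psi i p.

Definition Yc (k : nat) (p : Pt) : R :=
  - (p (Cu 0) * p (Cv 0)) * Xc k.-1 p - (k - 2)%:R * psi (k - 2) p.

Definition Dx0 (F : Pt -> R) : Pt -> R := fun p =>
  pd Cx F p
  + limn (fun N => \sum_(i < N)
        (p (Cu i.+1) * pd (Cu i) F p + p (Cv i.+1) * pd (Cv i) F p)).

Definition fu (p : Pt) : R := 1 / (p (Cv 0) - p (Cu 0)) - p (Cv 0) * p (Cu 1).
Definition fv (p : Pt) : R := 1 / (p (Cu 0) - p (Cv 0)) - p (Cu 0) * p (Cv 1).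

Definition DxS (F : Pt -> R) : Pt -> R := fun p =>
  Dx0 F p + limn (fun N => \sum_(a < N) Xc (a + 3)%N p * pd (Cpsi a) F p).

Definition DyS (F : Pt -> R) : Pt -> R := fun p =>
  pd Cy F p
  + limn (fun N => \sum_(i < N)
        (iter i Dx0 fu p * pd (Cu i) F p + iter i Dx0 fv p * pd (Cv i) F p))
  + limn (fun N => \sum_(a < N) Yc (a + 3)%N p * pd (Cpsi a) F p).

Definition Sact (Psi : nat -> Pt -> R) (F : Pt -> R) : Pt -> R := fun p =>
  limn (fun N => \sum_(a < N) Psi (a + 3)%N p * pd (Cpsi a) F p).

End Defs.

(* For m = k or k + 1, applying [S, D_x] = [S, D_y] = 0 to the coordinate
   function psi^(m) gives D_x Psi^(m) = S X^(m) and D_y Psi^(m) = S Y^(m), and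
   both vanish: X^(m) and Y^(m) only involve the psi^(i) with i < k, on which S
   acts trivially.  It remains to see that a smooth function G with
   D_x G = D_y G = 0 is constant on each of the two components u < v and u > v.
   Shifting u_(i+1) by 1 changes D_x G by dG/du_i, so all dG/du_i and dG/dv_i
   vanish (descending induction, G depends on finitely many coordinates).
   Then, along the line in which only u varies, D_x G is a polynomial in u whose
   coefficient of u^(a+1) is dG/dpsi^(a+3) plus derivatives in higher psi's,
   because X^(a+3) is monic of degree a+1 in u; it vanishes on a half-line, so
   all dG/dpsi vanish, and finally D_x G = dG/dx, D_y G = dG/dy.  A function all
   of whose partial derivatives vanish is constant on each component, by the
   mean value theorem along coordinate segments. *)

From Pilot Require Import Defs.
From HB Require Import structures.
From mathcomp Require Import all_boot all_order all_algebra.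
From mathcomp Require Import all_classical all_reals all_analysis.
From mathcomp Require Import ring lra zify.
Import Order.TTheory GRing.Theory Num.Theory.
Import numFieldNormedType.Exports.
Local Open Scope classical_set_scope.
Local Open Scope ring_scope.
Set Implicit Arguments. Unset Strict Implicit.

Lemma descending_ind (P : nat -> Prop) (B : nat) :
  (forall i, (B <= i)%N -> P i) ->
  (forall i, (i < B)%N -> (forall j, (i < j)%N -> P j) -> P i) ->
  forall i, P i.
Proof.
move=> top step; suff H n i : (B <= i + n)%N -> P i.
  by move=> i; apply: (H B); rewrite leq_addl.
elim: n i => [|n IH] i hi; first by apply: top; rewrite addn0 in hi.
case: (leqP B i) => [/top //|iB]; apply: step => // j ij; apply: IH; lia.
Qed.

Lemma poly_eq0_of_inj_roots (R : idomainType) (P : {poly R}) (f : nat -> R) :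
  injective f -> (forall n, P.[f n] = 0) -> P = 0.
Proof.
move=> finj root_f; apply: (@roots_geq_poly_eq0 _ _ (mkseq f (size P))).
- by apply/allP => _ /mapP[n _ ->]; apply/eqP.
- by rewrite mkseq_uniq.
- by rewrite size_mkseq.
Qed.

Section SigmaPoly.
Variable R : comNzRingType.

Definition sigmaP (v : R) (m : nat) : {poly R} := \sum_(i < m.+1) v ^+ (m - i) *: 'X^i.

Lemma sigmaP_horner v u m : (sigmaP v m).[u] = \sum_(i < m.+1) u ^+ i * v ^+ (m - i).
Proof.
by rewrite horner_sum; apply: eq_bigr => i _; rewrite hornerZ hornerXn mulrC.
Qed.

Lemma coef_sigmaP v m j : (sigmaP v m)`_j = if (j <= m)%N then v ^+ (m - j) else 0.
Proof.
rewrite coef_sum (eq_bigr (fun i : 'I_m.+1 => if i == j :> nat then v ^+ (m - i) else 0)).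
  by rewrite -big_mkcond (big_ord1_eq _ (fun i => v ^+ (m - i)) j) ltnS.
by move=> i _; rewrite coefZ coefXn eq_sym; case: eqP; rewrite ?mulr1 ?mulr0.
Qed.

End SigmaPoly.

Section Shifts.
Variable R : realType.
Implicit Types (p q : Pt R) (c : Coord) (t : R).

Lemma shiftE p c t c' :
  Defs.shift p c t c' = if Coord_eq_dec c' c then p c' + t else p c'.
Proof. by []. Qed.

Lemma shift_at p c t : Defs.shift p c t c = p c + t.
Proof. by rewrite shiftE; case: Coord_eq_dec. Qed.

Lemma shift_other p c t c' : c' <> c -> Defs.shift p c t c' = p c'.
Proof. by rewrite shiftE; case: Coord_eq_dec. Qed.

Lemma shift0 p c : Defs.shift p c 0 = p.
Proof. by apply: funext => c'; rewrite shiftE; case: Coord_eq_dec; rewrite ?addr0. Qed.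

Lemma shiftC p c1 t1 c2 t2 :
  Defs.shift (Defs.shift p c1 t1) c2 t2 = Defs.shift (Defs.shift p c2 t2) c1 t1.
Proof.
apply: funext => c'; rewrite !shiftE.
by do 2!case: Coord_eq_dec => ? //; rewrite addrAC.
Qed.

Lemma shiftD p c s t : Defs.shift (Defs.shift p c s) c t = Defs.shift p c (s + t).
Proof. by apply: funext => c'; rewrite !shiftE; case: Coord_eq_dec; rewrite ?addrA. Qed.

Lemma shift_dist p c t c' : `|Defs.shift p c t c' - p c'| <= `|t|.
Proof.
by rewrite shiftE; case: Coord_eq_dec => ?; rewrite ?[p c' + t]addrC ?addrK ?subrr ?normr0.
Qed.

Lemma Dom_shift p c t : c <> Cu 0 -> c <> Cv 0 -> Dom (Defs.shift p c t) <-> Dom p.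
Proof. by move=> cu cv; rewrite /Dom !shift_other //; exact: not_eq_sym. Qed.

Lemma Dom_lt_total p : Dom p -> (p (Cu 0) < p (Cv 0)) || (p (Cv 0) < p (Cu 0)).
Proof. by move=> hp; rewrite lt_total //; apply/eqP. Qed.

Lemma Dom_shift_near p c : Dom p -> \forall r \near 0, Dom (Defs.shift p c r).
Proof.
move=> hp; set d := p (Cu 0) - p (Cv 0).
have d_gt0 : 0 < `|d| / 2 by rewrite divr_gt0 // normr_gt0 subr_eq0; apply/eqP.
near=> r => E.
have r_small : `|r| < `|d| / 2 by near: r; exact: (@nbhs0_lt R R _ d_gt0).
have du := shift_dist p c r (Cu 0); have dv := shift_dist p c r (Cv 0).
have : `|d| <= `|Defs.shift p c r (Cv 0) - p (Cv 0)|
              + `|Defs.shift p c r (Cu 0) - p (Cu 0)|.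
  have -> : d = (Defs.shift p c r (Cv 0) - p (Cv 0)) - (Defs.shift p c r (Cu 0) - p (Cu 0)).
    by rewrite /d E; ring.
  exact: ler_normB.
lra.
Unshelve. all: by end_near. Qed.

Definition setc p c x : Pt R := Defs.shift p c (x - p c).

Lemma setc_at p c x : setc p c x c = x.
Proof. by rewrite /setc shift_at addrC subrK. Qed.

Lemma setc_other p c x c' : c' <> c -> setc p c x c' = p c'.
Proof. exact: shift_other. Qed.

Lemma setc_id p c : setc p c (p c) = p.
Proof. by rewrite /setc subrr shift0. Qed.

Lemma pd_near_eq (F1 F2 : Pt R -> R) p1 p2 c :
  (\forall r \near 0, F1 (Defs.shift p1 c r) = F2 (Defs.shift p2 c r)) ->
  pd c F1 p1 = pd c F2 p2.
Proof. by move=> h; rewrite /pd !derive1E; exact: near_eq_derive. Qed.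

Lemma derive1_at_shift (f : R -> R) s : 'D_1 (fun r => f (s + r)) 0 = 'D_1 f s.
Proof.
rewrite /derive /=; set d := (fun _ : R => _); set d' := (fun _ : R => _).
by have -> : d = d' by apply/funext => h; rewrite /d /d' /= !addr0 (addrC s).
Qed.

Lemma limn_sum_finite (f : nat -> R) B : (forall i, (B <= i)%N -> f i = 0) ->
  limn (fun N => \sum_(i < N) f i) = \sum_(i < B) f i.
Proof.
move=> f0; apply: (lim_near_cst (@Rhausdorff R)); near=> N.
have BN : (B <= N)%N by near: N; apply: nbhs_infty_ge.
rewrite -!(big_mkord xpredT) (@big_cat_nat _ _ _ B 0 N _ _ (leq0n B) BN) /=.
by rewrite [X in _ + X]big_nat_cond [X in _ + X]big1 ?addr0 // => i /andP[/andP[/f0 ->]].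
Unshelve. all: by end_near. Qed.

Lemma sum_shift_coord (C : nat -> Coord) (A : nat -> R) p B i :
  injective C -> (i < B)%N ->
  \sum_(j < B) Defs.shift p (C i) 1 (C j) * A j = \sum_(j < B) p (C j) * A j + A i.
Proof.
move=> Cinj iB.
have -> : A i = \sum_(j < B) if j == i :> nat then A j else 0.
  by rewrite -big_mkcond big_ord1_eq iB.
rewrite -big_split; apply: eq_bigr => j _ /=.
rewrite shiftE; case: Coord_eq_dec => [E|ne] /=.
  by rewrite (Cinj _ _ E) eqxx mulrDl mul1r.
by case: eqP => [E|_]; [case: ne; rewrite E | rewrite addr0].
Qed.

End Shifts.

Section CoordinateRows.
Variable R : realType.
Implicit Types (p : Pt R) (c : Coord) (cs : seq Coord).

Definition coord_row cs c : 'rV[R]_(size cs) :=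
  \row_i (if Coord_eq_dec (nth Cx cs i) c then 1 else 0).

Lemma restr_shift cs p c t :
  restr cs (Defs.shift p c t) = restr cs p + t *: coord_row cs c.
Proof.
apply/rowP => i; rewrite !mxE shiftE.
by case: Coord_eq_dec => ? /=; rewrite ?mulr1 ?mulr0 ?addr0.
Qed.

Lemma In_nth cs i : (i < size cs)%N -> List.In (nth Cx cs i) cs.
Proof. by elim: cs i => [|c cs IH] [|i] //= h; [left | right; apply: IH]. Qed.

Lemma coord_row_notin cs c : ~ List.In c cs -> coord_row cs c = 0.
Proof.
move=> notin; apply/rowP => i; rewrite !mxE; case: Coord_eq_dec => // E.
by case: notin; rewrite -E; apply: In_nth.
Qed.

Definition coord_index c : nat :=
  match c with Cu j | Cv j | Cpsi j => j.+1 | _ => 0 end.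

Definition index_bound cs : nat := foldr (fun c m => maxn (coord_index c) m) 0%N cs.

Lemma notin_above_bound cs c : (index_bound cs < coord_index c)%N -> ~ List.In c cs.
Proof.
elim: cs => [|c' cs IH] //= hc; case=> [E|hin].
  by move: hc; rewrite E gtn_max ltnn.
by apply: IH hin; move: hc; rewrite gtn_max => /andP[].
Qed.

End CoordinateRows.

Arguments coord_row {R}.

Section XPolynomial.
Variable R : realType.
Implicit Types (p : Pt R).

Lemma psi_setc_u0 p x i : psi i (setc p (Cu 0) x) = psi i p.
Proof. by case: i => [|[|[|i]]]; rewrite /= setc_other. Qed.

Lemma sigma_setc_u0 p x m : sigma m (setc p (Cu 0) x) = (sigmaP (p (Cv 0)) m).[x].
Proof. by rewrite sigmaP_horner /sigma setc_at setc_other. Qed.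

Definition XcP p (b : nat) : {poly R} :=
  sigmaP (p (Cv 0)) b.+1
  - \sum_(1 <= i < b.+1) (i%:R * psi i p) *: sigmaP (p (Cv 0)) (b - i).

Lemma XcP_horner p b x : (XcP p b).[x] = Xc (b + 3) (setc p (Cu 0) x).
Proof.
rewrite /XcP /Xc hornerD hornerN.
have -> : (b + 3 - 2 = b.+1)%N by lia.
rewrite sigma_setc_u0; congr (_ - _); rewrite horner_sum; apply: eq_big_nat => i /andP[i1 ib].
have -> : (b + 3 - i - 3 = b - i)%N by lia.
by rewrite hornerZ sigma_setc_u0 psi_setc_u0 mulrAC.
Qed.

Lemma coef_XcP_top p b : (XcP p b)`_b.+1 = 1.
Proof.
rewrite coefB coef_sigmaP leqnn subnn expr0 coef_sum big1 ?subr0 // => i _.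
by rewrite coefZ coef_sigmaP ltnNge leq_subr mulr0.
Qed.

Lemma coef_XcP_above p b j : (b.+1 < j)%N -> (XcP p b)`_j = 0.
Proof.
move=> bj; rewrite coefB coef_sigmaP leqNgt bj coef_sum big1 ?subr0 // => i _.
by rewrite coefZ coef_sigmaP leqNgt (leq_ltn_trans (leq_subr i b) (ltnW bj)) mulr0.
Qed.

End XPolynomial.

Section Representative.
Variable R : realType.
Variables (G : Pt R -> R) (cs : seq Coord) (g : 'rV[R]_(size cs) -> R).
Hypothesis G_g : forall p, Dom p -> G p = g (restr cs p).
Hypothesis g_derivable : forall p v, Dom p -> derivable g (restr cs p) v.
Implicit Types (p q : Pt R) (c : Coord).

Definition free_of c := forall q, Dom q -> pd c G q = 0.

Let gline p c r := g (restr cs p + r *: coord_row cs c).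

Lemma G_shift p c r : Dom (Defs.shift p c r) -> G (Defs.shift p c r) = gline p c r.
Proof. by move=> h; rewrite G_g // restr_shift. Qed.

Lemma gline_derivable p c s : Dom (Defs.shift p c s) -> derivable (gline p c) s 1.
Proof.
move=> h; have := g_derivable (v := coord_row cs c) h; rewrite restr_shift.
move=> /derivable1P hd; apply/derivable1P; set f1 := (fun _ => _) in hd.
set f2 := (fun _ => _); suff -> : f2 = f1 by [].
by apply/funext => r; rewrite /f1 /f2 /gline scalerDl [r *: 1]mulr1 addrCA addrC.
Qed.

Lemma pd_shift_gline p c s : Dom (Defs.shift p c s) ->
  pd c G (Defs.shift p c s) = 'D_1 (gline p c) s.
Proof.
move=> h; rewrite /pd derive1E -(derive1_at_shift (gline p c)); apply: near_eq_derive.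
near=> r; rewrite shiftD G_shift // -shiftD.
near: r; exact: Dom_shift_near.
Unshelve. all: by end_near. Qed.

Lemma free_of_notin c : ~ List.In c cs -> free_of c.
Proof.
move=> notin q hq; have := @pd_shift_gline q c 0; rewrite shift0 => -> //.
have -> : gline q c = cst (g (restr cs q)).
  by apply/funext => r; rewrite /gline coord_row_notin // scaler0 addr0.
exact: derive_cst.
Qed.

Lemma free_of_above c : (index_bound cs < coord_index c)%N -> free_of c.
Proof. by move/notin_above_bound; exact: free_of_notin. Qed.

Lemma G_shift_nonneg c p t : free_of c -> 0 <= t ->
  (forall s, 0 <= s <= t -> Dom (Defs.shift p c s)) -> G (Defs.shift p c t) = G p.
Proof.
move=> fc t0 path; have path0 : Dom (Defs.shift p c 0) by apply: path; rewrite lexx t0.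
have -> : G p = gline p c 0 by rewrite -G_shift // shift0.
rewrite G_shift; last by apply: path; rewrite lexx t0.
have der : {in `[0, t], forall x, derivable (gline p c) x 1}.
  by move=> x; rewrite in_itv /= => hx; apply: gline_derivable; exact: path.
have [x0 /[!in_itv] /= hx0 E] := MVT_segment t0
  (fun x hx => derivableP (der x (subset_itv_oo_cc hx))) (derivable_within_continuous der).
apply/eqP; rewrite -subr_eq0 E -pd_shift_gline ?fc ?mul0r //; exact: path.
Qed.

Lemma G_shift_segment c p t : free_of c ->
  (forall s, (0 <= s <= t) \/ (t <= s <= 0) -> Dom (Defs.shift p c s)) ->
  G (Defs.shift p c t) = G p.
Proof.
move=> fc path; case: (lerP 0 t) => t0.
  by apply: G_shift_nonneg => // s hs; apply: path; left.
rewrite -[in RHS](shift0 p c) -(subrr t) -shiftD.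
symmetry; apply: G_shift_nonneg => //; first by rewrite oppr_ge0 ltW.
move=> s /andP[s0 st]; rewrite shiftD; apply: path; right.
by apply/andP; split; lra.
Qed.

Lemma G_shift_free c p t : c <> Cu 0 -> c <> Cv 0 -> free_of c -> Dom p ->
  G (Defs.shift p c t) = G p.
Proof. by move=> cu cv fc hp; apply: G_shift_segment => // s _; apply/Dom_shift. Qed.

Lemma G_setc_u0 p x : free_of (Cu 0) ->
  (p (Cu 0) < p (Cv 0) /\ x < p (Cv 0)) \/ (p (Cv 0) < p (Cu 0) /\ p (Cv 0) < x) ->
  G (setc p (Cu 0) x) = G p.
Proof.
move=> fu side; apply: G_shift_segment => // s hs.
rewrite /Dom shift_at shift_other // => E.
by case: side hs => -[? ?] [/andP[? ?]|/andP[? ?]]; lra.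
Qed.

Lemma G_setc_v0 p y : free_of (Cv 0) ->
  (p (Cu 0) < p (Cv 0) /\ p (Cu 0) < y) \/ (p (Cv 0) < p (Cu 0) /\ y < p (Cu 0)) ->
  G (setc p (Cv 0) y) = G p.
Proof.
move=> fv side; apply: G_shift_segment => // s hs.
rewrite /Dom shift_at shift_other // => E.
by case: side hs => -[? ?] [/andP[? ?]|/andP[? ?]]; lra.
Qed.

Lemma pd_shift_free c p t : c <> Cu 0 -> c <> Cv 0 -> free_of c -> Dom p ->
  (fun c' => pd c' G (Defs.shift p c t)) = (fun c' => pd c' G p).
Proof.
move=> cu cv fc hp; apply/funext => c'; apply: pd_near_eq; near=> r.
rewrite shiftC G_shift_free //; near: r; exact: Dom_shift_near.
Unshelve. all: by end_near. Qed.

Lemma pd_setc_u0 c p x : c <> Cu 0 -> c <> Cv 0 -> free_of (Cu 0) ->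
  (p (Cu 0) < p (Cv 0) /\ x < p (Cv 0)) \/ (p (Cv 0) < p (Cu 0) /\ p (Cv 0) < x) ->
  pd c G (setc p (Cu 0) x) = pd c G p.
Proof.
move=> cu cv fu side; apply: pd_near_eq; near=> r.
have -> : Defs.shift (setc p (Cu 0) x) c r = setc (Defs.shift p c r) (Cu 0) x.
  by rewrite /setc shiftC (shift_other _ _ (not_eq_sym cu)).
have [ucu vcv] := (not_eq_sym cu, not_eq_sym cv).
by apply: G_setc_u0 => //; rewrite !shift_other.
Unshelve. all: by end_near. Qed.

Let B := index_bound cs.

Definition Dx_trunc p (d : Coord -> R) : R :=
  d Cx + \sum_(i < B) p (Cu i.+1) * d (Cu i) + \sum_(i < B) p (Cv i.+1) * d (Cv i)
  + \sum_(a < B) Xc (a + 3) p * d (Cpsi a).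

Lemma DxS_trunc p : Dom p -> DxS G p = Dx_trunc p (fun c => pd c G p).
Proof.
move=> hp; have f0 c : (B < coord_index c)%N -> pd c G p = 0.
  by move/free_of_above; apply.
rewrite /DxS /Dx0 (limn_sum_finite (B := B) (f :=
  fun i => p (Cu i.+1) * pd (Cu i) G p + p (Cv i.+1) * pd (Cv i) G p)); last first.
  by move=> i iB; rewrite !f0 ?mulr0 ?addr0 //= ltnS.
rewrite (limn_sum_finite (B := B) (f := fun a => Xc (a + 3) p * pd (Cpsi a) G p)); last first.
  by move=> a aB; rewrite f0 ?mulr0 //= ltnS.
by rewrite big_split /= !addrA.
Qed.

Definition jet_coord c := if c is (Cu (S _) | Cv (S _)) then True else False.

Lemma Xc_shift_jet m p c t : jet_coord c -> Xc m (Defs.shift p c t) = Xc m p.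
Proof.
move=> jc; have oth c' : (if c' is (Cu (S _) | Cv (S _)) then False else True) ->
    Defs.shift p c t c' = p c'.
  by move=> hc'; apply: shift_other => E; subst c'; case: c jc hc' => [||[|j]|[|j]|j].
rewrite /Xc /sigma !oth //; congr (_ - _); apply: eq_bigr => i _.
by case: i => [|[|[|i]]]; rewrite /= oth.
Qed.

Lemma DxS_shift_jet (C : nat -> Coord) i p : C = Cu \/ C = Cv -> (i < B)%N ->
  free_of (C i.+1) -> Dom p ->
  DxS G (Defs.shift p (C i.+1) 1) = DxS G p + pd (C i) G p.
Proof.
move=> hC iB fC hp; have [cu cv] : C i.+1 <> Cu 0 /\ C i.+1 <> Cv 0 by case: hC => ->.
rewrite !DxS_trunc ?Dom_shift // pd_shift_free // /Dx_trunc /=.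
have -> : \sum_(a < B) Xc (a + 3) (Defs.shift p (C i.+1) 1) * pd (Cpsi a) G p
        = \sum_(a < B) Xc (a + 3) p * pd (Cpsi a) G p.
  by apply: eq_bigr => a _; rewrite Xc_shift_jet //; case: hC => ->.
case: hC => ?; subst C.
- have := @sum_shift_coord R (fun j => Cu j.+1) (fun j => pd (Cu j) G p) p B i.
  move=> /(_ _ iB) /= ->; last by move=> ? ? [].
  have -> : \sum_(j < B) Defs.shift p (Cu i.+1) 1 (Cv j.+1) * pd (Cv j) G p
          = \sum_(j < B) p (Cv j.+1) * pd (Cv j) G p.
    by apply: eq_bigr => j _; rewrite shift_other.
  ring.
- have := @sum_shift_coord R (fun j => Cv j.+1) (fun j => pd (Cv j) G p) p B i.
  move=> /(_ _ iB) /= ->; last by move=> ? ? [].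
  have -> : \sum_(j < B) Defs.shift p (Cv i.+1) 1 (Cu j.+1) * pd (Cu j) G p
          = \sum_(j < B) p (Cu j.+1) * pd (Cu j) G p.
    by apply: eq_bigr => j _; rewrite shift_other.
  ring.
Qed.

Hypothesis DxG : forall q, Dom q -> DxS G q = 0.

Lemma free_of_jets i : free_of (Cu i) /\ free_of (Cv i).
Proof.
move: i; apply: (descending_ind (B := B)) => [i Bi | i iB /(_ i.+1 (ltnSn i)) [fu fv]].
  by split; apply: free_of_above; rewrite /= ltnS.
have step C : C = Cu \/ C = Cv -> free_of (C i.+1) -> free_of (C i).
  move=> hC fC q hq; have [cu cv] : C i.+1 <> Cu 0 /\ C i.+1 <> Cv 0 by case: hC => ->.
  have := DxS_shift_jet hC iB fC hq; rewrite !DxG ?Dom_shift // add0r.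
  by move=> <-.
by split; [apply: step fu; left | apply: step fv; right].
Qed.

Definition DxS_poly p : {poly R} :=
  (pd Cx G p)%:P + \sum_(b < B) pd (Cpsi b) G p *: XcP p b.

Lemma DxS_setc_u0 p x :
  (p (Cu 0) < p (Cv 0) /\ x < p (Cv 0)) \/ (p (Cv 0) < p (Cu 0) /\ p (Cv 0) < x) ->
  DxS G (setc p (Cu 0) x) = (DxS_poly p).[x].
Proof.
move=> side; have fu := (free_of_jets 0).1.
have hq : Dom (setc p (Cu 0) x).
  by rewrite /Dom setc_at setc_other // => E; case: side => -[]; lra.
rewrite DxS_trunc // /Dx_trunc /=.
rewrite [X in _ + X + _ + _]big1 => [|j _]; last by rewrite (free_of_jets j).1 ?mulr0.
rewrite [X in _ + X + _]big1 => [|j _]; last by rewrite (free_of_jets j).2 ?mulr0.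
rewrite !addr0.
rewrite hornerD hornerC horner_sum pd_setc_u0 //; congr (_ + _).
by apply: eq_bigr => b _; rewrite hornerZ XcP_horner pd_setc_u0 // mulrC.
Qed.

Lemma DxS_poly_eq0 p : Dom p -> DxS_poly p = 0.
Proof.
move=> hp; set e : R := if p (Cu 0) < p (Cv 0) then -1 else 1.
have e_neq0 : e != 0 by rewrite /e; case: ifP; rewrite ?oppr_eq0 oner_eq0.
apply: (@poly_eq0_of_inj_roots _ _ (fun n => p (Cu 0) + e * n.+1%:R)).
  by move=> m n /addrI /(mulfI e_neq0) /eqP; rewrite eqr_nat eqSS => /eqP.
move=> n; set x := p (Cu 0) + e * n.+1%:R.
have side : (p (Cu 0) < p (Cv 0) /\ x < p (Cv 0)) \/ (p (Cv 0) < p (Cu 0) /\ p (Cv 0) < x).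
  have n_gt0 : (0 : R) < n.+1%:R by rewrite ltr0Sn.
  have /orP[lt|gt] := Dom_lt_total hp.
  + by left; rewrite /x /e lt; split => //; lra.
  + by right; rewrite /x /e (lt_gtF gt); split => //; lra.
rewrite -DxS_setc_u0 // DxG // /Dom setc_at setc_other // => E.
by case: side => -[]; lra.
Qed.

Lemma coef_DxS_poly p a : (a < B)%N -> (forall b, (a < b)%N -> free_of (Cpsi b)) ->
  Dom p -> (DxS_poly p)`_a.+1 = pd (Cpsi a) G p.
Proof.
move=> aB fb hp; rewrite coefD coefC /= add0r coef_sum.
have -> : pd (Cpsi a) G p = \sum_(b < B) if b == a :> nat then pd (Cpsi b) G p else 0.
  by rewrite -big_mkcond (big_ord1_eq _ (fun b => pd (Cpsi b) G p)) aB.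
apply: eq_bigr => b _; rewrite coefZ; case: (ltngtP b a) => [ba|ab|->].
- by rewrite coef_XcP_above ?ltnS // mulr0.
- by rewrite fb // mul0r.
- by rewrite coef_XcP_top mulr1.
Qed.

Lemma free_of_psi a : free_of (Cpsi a).
Proof.
move: a; apply: (descending_ind (B := B)) => [a Ba | a aB fb].
  by apply: free_of_above; rewrite /= ltnS.
by move=> p hp; rewrite -coef_DxS_poly // DxS_poly_eq0 // coef0.
Qed.

Hypothesis DyG : forall q, Dom q -> DyS G q = 0.

Lemma free_of_all c : free_of c.
Proof.
have fuj i := (free_of_jets i).1; have fvj i := (free_of_jets i).2.
case: c => [||i|i|a] // p hp; last exact: free_of_psi.
- have := DxG hp; rewrite DxS_trunc // /Dx_trunc /= !big1 ?addr0 // => i _;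
    by rewrite ?(fuj i) ?(fvj i) ?(free_of_psi i) ?mulr0.
- have := DyG hp; rewrite /DyS.
  rewrite (limn_sum_finite (B := 0) (f := fun i => iter i (@Dx0 R) (@fu R) p * pd (Cu i) G p
    + iter i (@Dx0 R) (@fv R) p * pd (Cv i) G p)); last first.
    by move=> i _ /=; rewrite fuj ?fvj // !mulr0 addr0.
  rewrite (limn_sum_finite (B := 0) (f := fun a => Yc (a + 3) p * pd (Cpsi a) G p)).
    by rewrite !big_ord0 !addr0.
  by move=> a _ /=; rewrite free_of_psi // mulr0.
Qed.

Lemma G_eq_of_uv p q : Dom p -> p (Cu 0) = q (Cu 0) -> p (Cv 0) = q (Cv 0) -> G p = G q.
Proof.
move=> hp hu hv; have hq : Dom q by rewrite /Dom -hu -hv.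
pose upd l := foldr (fun c r => setc r c (q c)) p l.
have upd_inv l : [/\ Dom (upd l), G (upd l) = G p, upd l (Cu 0) = q (Cu 0),
    upd l (Cv 0) = q (Cv 0) & forall c, List.In c l -> upd l c = q c].
  elim: l => [|c l [hd hG hu' hv' hin]] /=; first by split.
  case: (Coord_eq_dec c (Cu 0)) => [->|cu].
    by rewrite -hu' setc_id; split => // c' [<-|/hin].
  case: (Coord_eq_dec c (Cv 0)) => [->|cv].
    by rewrite -hv' setc_id; split => // c' [<-|/hin].
  have [ucu vcv] := (not_eq_sym cu, not_eq_sym cv).
  split; first by rewrite /setc; apply/Dom_shift.
  - by rewrite /setc G_shift_free //; apply: free_of_all.
  - by rewrite setc_other.
  - by rewrite setc_other.
  move=> c' [<-|/hin]; first exact: setc_at.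
  by case: (Coord_eq_dec c' c) => [->|c'c]; rewrite ?setc_at // setc_other.
have [hd <- _ _ hin] := upd_inv cs.
rewrite (G_g hd) (G_g hq); congr g; apply/rowP => i; rewrite !mxE hin //; exact: In_nth.
Qed.

(* The path (u, v) -> (m, v) -> (m, v') -> (u', v') never crosses the diagonal u = v. *)
Lemma G_eq_via p q m :
  (p (Cu 0) < p (Cv 0) /\ m < p (Cv 0) /\ q (Cu 0) < q (Cv 0) /\ m < q (Cv 0)) \/
  (p (Cv 0) < p (Cu 0) /\ p (Cv 0) < m /\ q (Cv 0) < q (Cu 0) /\ q (Cv 0) < m) ->
  G p = G q.
Proof.
move=> side; set p1 := setc p (Cu 0) m; set p2 := setc p1 (Cv 0) (q (Cv 0)).
set p3 := setc p2 (Cu 0) (q (Cu 0)).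
have [u1 v1] : p1 (Cu 0) = m /\ p1 (Cv 0) = p (Cv 0) by rewrite /p1 setc_at setc_other.
have [u2 v2] : p2 (Cu 0) = m /\ p2 (Cv 0) = q (Cv 0).
  by rewrite /p2 setc_at setc_other.
have [u3 v3] : p3 (Cu 0) = q (Cu 0) /\ p3 (Cv 0) = q (Cv 0).
  by rewrite /p3 setc_at setc_other.
have g1 : G p1 = G p.
  by apply: G_setc_u0 (free_of_all _) _; case: side => [[? [? ?]]|[? [? ?]]]; [left|right].
have g2 : G p2 = G p1.
  apply: G_setc_v0 (free_of_all _) _; rewrite u1 v1.
  by case: side => [[? [? [? ?]]]|[? [? [? ?]]]]; [left|right].
have g3 : G p3 = G p2.
  apply: G_setc_u0 (free_of_all _) _; rewrite u2 v2.
  by case: side => [[? [? [? ?]]]|[? [? [? ?]]]]; [left|right].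
rewrite -g1 -g2 -g3; apply: G_eq_of_uv => //; rewrite /Dom u3 v3 => E.
by case: side => [[? [? [? ?]]]|[? [? [? ?]]]]; lra.
Qed.

Lemma G_const_on_side p q : Dom p -> Dom q ->
  (p (Cu 0) < p (Cv 0)) = (q (Cu 0) < q (Cv 0)) -> G p = G q.
Proof.
move=> hp hq side; case/orP: (Dom_lt_total hp) => hpl.
  have hql : q (Cu 0) < q (Cv 0) by rewrite -side.
  apply: (G_eq_via (m := Num.min (p (Cu 0)) (q (Cu 0)))); left.
  by rewrite !gt_min hpl hql orbT.
have hqg : q (Cv 0) < q (Cu 0).
  by case/orP: (Dom_lt_total hq) => // hql; move: side; rewrite hql (lt_gtF hpl).
apply: (G_eq_via (m := Num.max (p (Cu 0)) (q (Cu 0)))); right.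
by rewrite !lt_max hpl hqg orbT.
Qed.

End Representative.

Lemma const_on_sides (R : realType) (G : Pt R -> R) : smoothfun G ->
  (forall q, Dom q -> DxS G q = 0) -> (forall q, Dom q -> DyS G q = 0) ->
  exists c1 c2 : R, forall p, Dom p -> G p = if p (Cu 0) < p (Cv 0) then c1 else c2.
Proof.
move=> [cs [_ [g [G_g g_smooth]]]] DxG DyG.
have g_der p v : Dom p -> derivable g (restr cs p) v.
  by move=> hp; have [_] := g_smooth [::] (restr cs p) (ex_intro2 _ _ p hp erefl); apply.
pose p_lt : Pt R := fun c => if c is Cv 0 then 1 else 0.
pose p_gt : Pt R := fun c => if c is Cu 0 then 1 else 0.
have Dp_lt : Dom p_lt by rewrite /Dom /p_lt => /eqP; rewrite eq_sym oner_eq0.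
have Dp_gt : Dom p_gt by rewrite /Dom /p_gt => /eqP; rewrite oner_eq0.
exists (G p_lt), (G p_gt) => p hp; case: ifP => side.
  by apply: (G_const_on_side G_g g_der DxG DyG) => //; rewrite side /p_lt ltr01.
apply: (G_const_on_side G_g g_der DxG DyG) => //.
by rewrite side /p_gt; apply/esym/negbTE; rewrite -leNgt ler01.
Qed.

Section PsiCoordinates.
Variable R : realType.
Implicit Types (p q : Pt R) (c : Coord).

Definition psi_coord j : Pt R -> R := fun q => q (Cpsi j).

Let row_coord (w : 'rV[R]_1) : R := w 0 0.

Lemma row_coord_derive (v x : 'rV[R]_1) : derivable row_coord x v /\ 'D_v row_coord x = v 0 0.
Proof.
have cvg_v : (fun h : R => h^-1 *: ((row_coord \o shift x) (h *: v) - row_coord x)) @ 0^'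
    --> v 0 0.
  apply: cvg_near_cst; near=> h.
  rewrite /row_coord /= !mxE addrK [X in X = _]mulrA mulVf ?mul1r //.
  near: h; exact: nbhs_dnbhs_neq.
split; first by apply/cvg_ex; exists (v 0 0).
by apply: cvg_lim; [exact: Rhausdorff | exact: cvg_v].
Unshelve. all: by end_near. Qed.

Lemma iterD_row_coord (vs : seq 'rV[R]_1) :
  Defs.iterD vs row_coord = row_coord \/ exists a : R, Defs.iterD vs row_coord = cst a.
Proof.
elim: vs => [|v vs [E|[a E]]]; [by left | right | right].
- by exists (v 0 0); apply/funext => x /=; rewrite E; exact: (row_coord_derive v x).2.
- by exists 0; apply/funext => x /=; rewrite E; exact: derive_cst.
Qed.

Lemma smooth_psi_coord j : smoothfun (psi_coord j).
Proof.
exists [:: Cpsi j]; split; first by constructor; [by [] | constructor].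
exists row_coord; split; first by move=> p _; rewrite /row_coord /restr mxE.
move=> vs x _; case: (iterD_row_coord vs) => [->|[a ->]]; split.
- exact: coord_continuous.
- by move=> v; exact: (row_coord_derive v x).1.
- exact: cst_continuous.
- by move=> v; exact: derivable_cst.
Qed.

Lemma pd_psi_coord c j q : pd c (psi_coord j) q = if Coord_eq_dec (Cpsi j) c then 1 else 0.
Proof.
rewrite /pd /psi_coord; case: Coord_eq_dec => [E|ne].
  have -> : (fun t => Defs.shift q c t (Cpsi j)) = shift (q (Cpsi j)).
    by apply/funext => t; rewrite -E shift_at addrC.
  by rewrite derive1E (@derive_val _ _ _ _ _ _ _ (is_derive_shift 0 1 (q (Cpsi j)))).
have -> : (fun t => Defs.shift q c t (Cpsi j)) = cst (q (Cpsi j)).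
  by apply/funext => t; rewrite shift_other.
exact: derive1_cst.
Qed.

Lemma limn_sum_pd_psi_coord (f : nat -> R) j q :
  limn (fun N => \sum_(a < N) f a * pd (Cpsi a) (psi_coord j) q) = f j.
Proof.
have pdE a : pd (Cpsi a) (psi_coord j) q = if a == j then 1 else 0.
  rewrite pd_psi_coord; case: Coord_eq_dec => [E|ne] /=; first by case: E => ->; rewrite eqxx.
  by case: eqP => // E; case: ne; rewrite E.
rewrite (limn_sum_finite (B := j.+1) (f := fun a => f a * pd (Cpsi a) (psi_coord j) q)).
  rewrite (eq_bigr (fun a : 'I_j.+1 => if a == j :> nat then f a else 0)).
    by rewrite -big_mkcond (big_ord1_eq _ f) ltnSn.
  by move=> a _; rewrite pdE; case: eqP; rewrite ?mulr1 ?mulr0.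
by move=> a ja /=; rewrite pdE gtn_eqF ?mulr0.
Qed.

Lemma pd_psi_coord_other c j q : c <> Cpsi j -> pd c (psi_coord j) q = 0.
Proof. by move=> ne; rewrite pd_psi_coord; case: Coord_eq_dec => // E; case: ne. Qed.

Lemma Sact_psi_coord (Psi : nat -> Pt R -> R) j : Sact Psi (psi_coord j) = Psi (j + 3)%N.
Proof. by apply/funext => q; rewrite /Sact (limn_sum_pd_psi_coord (fun a => Psi (a + 3)%N q)). Qed.

Lemma DxS_psi_coord j : DxS (psi_coord j) = Xc (j + 3).
Proof.
apply/funext => q; rewrite /DxS /Dx0 pd_psi_coord_other // add0r.
rewrite (limn_sum_finite (B := 0) (f := fun i => q (Cu i.+1) * pd (Cu i) (psi_coord j) q
   + q (Cv i.+1) * pd (Cv i) (psi_coord j) q)) ?big_ord0 ?add0r.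
  exact: (limn_sum_pd_psi_coord (fun a => Xc (a + 3)%N q)).
by move=> i _ /=; rewrite !pd_psi_coord_other // !mulr0 addr0.
Qed.

Lemma DyS_psi_coord j : DyS (psi_coord j) = Yc (j + 3).
Proof.
apply/funext => q; rewrite /DyS pd_psi_coord_other // add0r.
rewrite (limn_sum_finite (B := 0) (f := fun i =>
    iter i (@Dx0 R) (@fu R) q * pd (Cu i) (psi_coord j) q
  + iter i (@Dx0 R) (@fv R) q * pd (Cv i) (psi_coord j) q)) ?big_ord0 ?add0r.
  exact: (limn_sum_pd_psi_coord (fun a => Yc (a + 3)%N q)).
by move=> i _ /=; rewrite !pd_psi_coord_other // !mulr0 addr0.
Qed.

(* [psi 0 p] is the junk value [p (Cpsi 0)], hence [1 <= i]. *)
Lemma psi_shift_above i p a t : (1 <= i < a + 3)%N ->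
  psi i (Defs.shift p (Cpsi a) t) = psi i p.
Proof. by case: i => [|[|[|i]]] // ia; rewrite /= shift_other // => -[E]; move: ia; lia. Qed.

Lemma Xc_shift_above m p a t : (m <= a + 4)%N -> Xc m (Defs.shift p (Cpsi a) t) = Xc m p.
Proof.
move=> ma; rewrite /Xc /sigma !shift_other //; congr (_ - _).
by apply: eq_big_nat => i hi; rewrite psi_shift_above //; lia.
Qed.

Lemma Yc_shift_above m p a t : (3 <= m <= a + 4)%N ->
  Yc m (Defs.shift p (Cpsi a) t) = Yc m p.
Proof.
move=> /andP[m3 ma]; rewrite /Yc !shift_other // Xc_shift_above; last lia.
by rewrite psi_shift_above //; lia.
Qed.

Lemma Sact_eq0 (Psi : nat -> Pt R -> R) k (H : Pt R -> R) p :
  (forall a, (a < k)%N -> forall p, Psi a p = 0) ->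
  (forall a t, (k <= a + 3)%N -> H (Defs.shift p (Cpsi a) t) = H p) ->
  Sact Psi H p = 0.
Proof.
move=> Psi0 H_inv; rewrite /Sact (limn_sum_finite (B := 0)
  (f := fun a => Psi (a + 3)%N p * pd (Cpsi a) H p)) ?big_ord0 // => a _.
case: (ltnP (a + 3) k) => ka; first by rewrite Psi0 // mul0r.
rewrite /pd (_ : (fun t => H (Defs.shift p (Cpsi a) t)) = cst (H p)).
  by rewrite derive1_cst mulr0.
by apply/funext => t; rewrite H_inv.
Qed.

End PsiCoordinates.

Theorem mainTheorem4 (R : realType) (k : nat) (Psi : nat -> Pt R -> R) :
  (3 <= k)%N ->
  (forall a, (a < k)%N -> forall p, Psi a p = 0) ->
  (forall a, (k <= a)%N -> smoothfun (Psi a)) ->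
  (forall F, smoothfun F -> forall p, Dom p ->
     Sact Psi (DxS F) p = DxS (Sact Psi F) p) ->
  (forall F, smoothfun F -> forall p, Dom p ->
     Sact Psi (DyS F) p = DyS (Sact Psi F) p) ->
  exists c1 c2 d1 d2 : R, forall p : Pt R, Dom p ->
    Psi k p = (if p (Cu 0) < p (Cv 0) then c1 else c2) /\
    Psi k.+1 p = (if p (Cu 0) < p (Cv 0) then d1 else d2).
Proof.
move=> k3 Psi0 Psi_smooth SDx SDy.
have const j : (k <= j + 3 <= k.+1)%N -> exists c1 c2 : R, forall p, Dom p ->
    Psi (j + 3)%N p = if p (Cu 0) < p (Cv 0) then c1 else c2.
  move=> /andP[kj jk]; apply: const_on_sides; first by apply: Psi_smooth.
  - move=> p hp; rewrite -Sact_psi_coord -(SDx _ (@smooth_psi_coord R j)) // DxS_psi_coord.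
    by apply: (Sact_eq0 Psi0) => a t ka; apply: Xc_shift_above; lia.
  - move=> p hp; rewrite -Sact_psi_coord -(SDy _ (@smooth_psi_coord R j)) // DyS_psi_coord.
    by apply: (Sact_eq0 Psi0) => a t ka; apply: Yc_shift_above; lia.
have [c1 [c2 Hk]] := const (k - 3)%N ltac:(lia).
have [d1 [d2 Hk1]] := const (k - 2)%N ltac:(lia).
rewrite (_ : (k - 3 + 3 = k)%N) in Hk; last lia.
rewrite (_ : (k - 2 + 3 = k.+1)%N) in Hk1; last lia.
by exists c1, c2, d1, d2 => p hp; rewrite Hk ?Hk1.
Qed.
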